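(* Let $\mathbb{X},\mathbb{Y}$ be finite-dimensional Banach spaces and let $T\in\mathbb{L}(\mathbb{X},\mathbb{Y})$ with $\|T\|=1$. Then $T$ is $k$-smooth if and only if its adjoint $T^*\in\mathbb{L}(\mathbb{Y}^*,\mathbb{X}^* )$ is $k$-smooth.
   Context: $\mathbb{L}(\mathbb{X},\mathbb{Y})$ is the space of linear operators with the operator norm. For a Banach space $\mathbb{Z}$ and a unit vector $z$, $J(z)=\{f\in \mathbb{Z}^*:\|f\|=1,\ f(z)=1\}$; $z$ is $k$-smooth if $\dim\operatorname{span} J(z)=k$. An operator of norm one is $k$-smooth if it is a $k$-smooth point of the unit sphere of the corresponding operator space. *)

(* finite-dimensional real normed spaces as vectType R with a norm function. *)
From HB Require Import structures.
From mathcomp Require Import all_boot all_order all_algebra.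
From mathcomp Require Import classical_sets reals.
Set Implicit Arguments. Unset Strict Implicit. Unset Printing Implicit Defensive.
Import Order.TTheory GRing.Theory Num.Theory.
Local Open Scope ring_scope.
Local Open Scope classical_set_scope.

Definition is_norm (R : realType) (V : vectType R) (N : V -> R) : Prop :=
  [/\ forall x y : V, N (x + y) <= N x + N y,
      forall (a : R) (x : V), N (a *: x) = `|a| * N x
    & forall x : V, N x = 0 -> x = 0].

Definition opnorm (R : realType) (U V : vectType R) (NU : U -> R) (NV : V -> R)
  (f : 'Hom(U, V)) : R :=
  sup [set NV (f x) | x in [set x : U | NU x <= 1]].

Definition dualnorm (R : realType) (U : vectType R) (NU : U -> R)
  (g : 'Hom(U, R^o)) : R :=
  opnorm NU (fun r : R^o => `|r : R|) g.

Definition adjoint (R : realType) (X Y : vectType R) (T : 'Hom(X, Y))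
  : 'Hom('Hom(Y, R^o), 'Hom(X, R^o)) :=
  linfun (fun g : 'Hom(Y, R^o) => (g \o T)%VF).

Definition Jset (R : realType) (Z : vectType R) (N : Z -> R) (z : Z)
  : set 'Hom(Z, R^o) :=
  [set f | dualnorm N f = 1 /\ f z = 1].

(* dim span S = k : span S is the span of finitely many elements of S,
   and this subspace has dimension k *)
Definition dim_span_eq (R : realType) (V : vectType R) (S : set V) (k : nat) : Prop :=
  exists s : seq V,
    [/\ forall v, v \in s -> S v,
        forall v, S v -> v \in <<s>>%VS
      & \dim <<s>>%VS = k].

Definition ksmooth (R : realType) (Z : vectType R) (N : Z -> R) (z : Z) (k : nat) : Prop :=
  N z = 1 /\ dim_span_eq (Jset N z) k.

(* Finite-dimensional duality: S |-> S^* is a linear bijection from L(X, Y) onto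
   the operators from Y^* to X^* (injective by Hahn-Banach, hence onto by counting
   dimensions), and it is an isometry, because Hahn-Banach provides for every S x a
   norming functional g, with (S^* g) x = ||S x||.  A linear isometric isomorphism
   Phi carries J(z) onto J(Phi z) by precomposition with its inverse, so it
   preserves k-smoothness. *)

From HB Require Import structures.
From mathcomp Require Import all_boot all_order all_algebra.
From mathcomp Require Import boolp classical_sets reals topology normedtype derive.
From mathcomp Require Import lra zify ring.
Import Order.TTheory GRing.Theory Num.Theory.
Import VectorInternalTheory numFieldNormedType.Exports.
Set Implicit Arguments. Unset Strict Implicit. Unset Printing Implicit Defensive.
Local Open Scope ring_scope.
Local Open Scope classical_set_scope.

Definition is_seminorm (R : realType) (V : vectType R) (P : V -> R) : Prop :=
  (forall x y, P (x + y) <= P x + P y) /\ (forall (a : R) x, P (a *: x) = `|a| * P x).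

Lemma norm_seminorm (R : realType) (V : vectType R) (N : V -> R) :
  is_norm N -> is_seminorm N.
Proof. by case. Qed.

Lemma abs_seminorm (R : realType) : is_seminorm (fun r : R^o => `|r : R|).
Proof. by split => [x y|a x]; [exact: ler_normD | exact: normrM]. Qed.

Section Seminorm.
Variables (R : realType) (V : vectType R) (P : V -> R) (hP : is_seminorm P).

Lemma seminormD x y : P (x + y) <= P x + P y.
Proof. by case: hP. Qed.

Lemma seminormZ (a : R) x : P (a *: x) = `|a| * P x.
Proof. by case: hP. Qed.

Lemma seminorm0 : P 0 = 0.
Proof. by rewrite -(scale0r (0 : V)) seminormZ normr0 mul0r. Qed.

Lemma seminormN x : P (- x) = P x.
Proof. by rewrite -scaleN1r seminormZ normrN normr1 mul1r. Qed.

Lemma seminorm_ge0 x : 0 <= P x.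
Proof.
have := seminormD x (- x); rewrite subrr seminorm0 seminormN => h.
by rewrite -(@pmulr_rge0 _ 2) // mulr_natl mulr2n.
Qed.

Lemma seminorm_sum (I : Type) (r : seq I) (F : I -> V) :
  P (\sum_(i <- r) F i) <= \sum_(i <- r) P (F i).
Proof.
apply: (big_ind2 (fun x y => P x <= y)) => //; first by rewrite seminorm0.
by move=> x1 y1 x2 y2 h1 h2; apply: le_trans (seminormD _ _) (lerD h1 h2).
Qed.

Lemma seminorm_dist x y : `|P x - P y| <= P (x - y).
Proof.
have h1 := seminormD (y - x) x; rewrite subrK -opprB seminormN in h1.
have h2 := seminormD (x - y) y; rewrite subrK in h2.
by rewrite ler_norml; apply/andP; split; lra.
Qed.

End Seminorm.

Lemma norm_gt0 (R : realType) (V : vectType R) (N : V -> R) (x : V) :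
  is_norm N -> x != 0 -> 0 < N x.
Proof.
move=> hN x0; rewrite lt_def (seminorm_ge0 (norm_seminorm hN)) andbT.
by apply: contra x0 => /eqP; case: hN => _ _ /[apply] ->.
Qed.

Lemma mx_norm_coord (R : realType) n (a : 'rV[R]_n) j : `|a 0 j| <= `|a|.
Proof.
by rewrite [leRHS]/Num.Def.normr /= mx_normrE; apply/bigmax_geP; right; exists (0, j).
Qed.

Section FiniteDimension.
Variables (R : realType) (V : vectType R).

Lemma seminorm_r2v_le (P : V -> R) : is_seminorm P ->
  exists2 K, 0 <= K & forall a : 'rV[R]_(dim V), P (r2v a) <= K * `|a|.
Proof.
move=> hP; exists (\sum_(j < dim V) P (r2v 'e_j)).
  by apply: sumr_ge0 => j _; apply: seminorm_ge0.
move=> a; rewrite {1}(row_sum_delta a) linear_sum /=.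
apply: le_trans (seminorm_sum hP _ _) _; rewrite mulr_suml; apply: ler_sum => j _.
by rewrite linearZ seminormZ // mulrC ler_wpM2l ?seminorm_ge0 ?mx_norm_coord.
Qed.

Variables (N : V -> R) (hN : is_norm N).

Lemma norm_r2v_continuous : continuous (fun a : 'rV[R]_(dim V) => N (r2v a)).
Proof.
have hS := norm_seminorm hN; have [K K0 hK] := seminorm_r2v_le hS.
move=> a; apply/(@cvgrPdist_le _ _ _ _ (nbhs_filter a)) => e e0.
have eK : 0 < e / (K + 1) by rewrite divr_gt0 // ltr_wpDl.
apply: filterS (nbhsx_ballx a _ eK) => b; rewrite -ball_normE /= => hab.
apply: le_trans (seminorm_dist hS _ _) _; rewrite -linearB.
apply: le_trans (hK _) (le_trans (_ : _ <= (K + 1) * `|a - b|) _).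
  by rewrite ler_wpM2r // lerDl.
by rewrite -ler_pdivlMl ?ltr_wpDl // mulrC ltW.
Qed.

(* The minimum of [N \o r2v] on the compact unit sphere of the max norm. *)
Lemma norm_r2v_ge : exists2 c, 0 < c & forall a : 'rV[R]_(dim V), c * `|a| <= N (r2v a).
Proof.
have hS := norm_seminorm hN.
have [a0|/existsNP[a0 /eqP a0n]] := pselect (forall a : 'rV[R]_(dim V), a = 0).
  by exists 1 => // a; rewrite (a0 a) normr0 mulr0 seminorm_ge0.
pose A := [set a : 'rV[R]_(dim V) | `|a| = 1].
have normalizeA a : a != 0 -> A (`|a|^-1 *: a).
  by move=> an; rewrite /A /= normrZ normfV normr_id mulVf // normr_eq0.
have cA : compact A.
  apply: bounded_closed_compact; first by exists 1; split => // M M1 x /= ->; exact: ltW.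
  exact: (continuous_closedP _).1 (@norm_continuous _ _) _ (@closed_eq R 1).
have A0 : A !=set0 by exists (`|a0|^-1 *: a0); exact: normalizeA.
have [c0 c0A hc0] := EVT_min_rV A0 cA (continuous_subspaceT norm_r2v_continuous).
have c0n0 : c0 != 0 by move: c0A; rewrite inE /A /= => c01; rewrite -normr_eq0 c01 oner_eq0.
have Nc0 : 0 < N (r2v c0).
  by apply: norm_gt0 hN _; apply: contra c0n0 => /eqP/(congr1 v2r); rewrite r2vK linear0 => ->.
exists (N (r2v c0)) => // a; have [->|an] := eqVneq a 0.
  by rewrite normr0 mulr0 seminorm_ge0.
have := hc0 _ (mem_set (normalizeA _ an)).
rewrite linearZ seminormZ // normfV normr_id ler_pdivlMl ?normr_gt0 //.
by rewrite mulrC.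
Qed.

Lemma seminorm_le_norm (P : V -> R) : is_seminorm P ->
  exists2 M, 0 <= M & forall x, P x <= M * N x.
Proof.
move=> hP; have [K K0 hK] := seminorm_r2v_le hP; have [c c0 hc] := norm_r2v_ge.
exists (K / c) => [|x]; first by rewrite divr_ge0 // ltW.
rewrite -[x in P x]v2rK -[x in N x]v2rK; apply: le_trans (hK _) _.
by rewrite -mulrA ler_wpM2l // ler_pdivlMl.
Qed.

End FiniteDimension.

Lemma separating_functional (R : realType) (Y : vectType R) (U : {vspace Y}) (v : Y) :
  v \notin U ->
  exists2 h : 'Hom(Y, R^o), forall u, u \in U -> h u = 0 & h v = 1.
Proof.
move=> vU; set w := v - projv U v.
have w0 : w != 0 by apply: contra vU; rewrite subr_eq0 => /eqP ->; exact: memv_proj.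
have [j wj] : exists j, coord (vbasis fullv) j w != 0.
  apply/existsP; apply: contraR w0; rewrite negb_exists => /forallP w0.
  rewrite [w](coord_vbasis (memvf w)) big1 // => j _.
  by rewrite (eqP (negPn (w0 j))) scale0r.
exists ((coord (vbasis fullv) j w)^-1 *: (linfun (coord (vbasis fullv) j) \o (\1 - projv U))%VF).
  move=> u uU; rewrite scale_lfunE comp_lfunE add_lfunE opp_lfunE id_lfunE.
  by rewrite projv_id // subrr linear0 scaler0.
rewrite scale_lfunE comp_lfunE add_lfunE opp_lfunE id_lfunE lfunE -/w.
exact: mulVf.
Qed.

Lemma dimv_add_line (K : fieldType) (V : vectType K) (U : {vspace V}) (v : V) :
  v \notin U -> (\dim U < \dim (U + <[v]>))%N.
Proof.
move=> vU; rewrite (ltn_leqif (dimv_leqif_sup (addvSl U <[v]>))).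
by apply: contra vU => /subvP; apply; apply: (subvP (addvSr U _)); exact: memv_line.
Qed.

Section HahnBanach.
Variables (R : realType) (Y : vectType R) (P : Y -> R) (hP : is_seminorm P).
Variables (U : {vspace Y}) (f : 'Hom(Y, R^o)).
Hypothesis fP : forall u, u \in U -> f u <= P u.

(* [c] is the value at [v] of the one-step extension built in [hahn_banach_step]. *)
Lemma hahn_banach_gap (v : Y) : exists c : R, forall w, w \in U ->
  f w - P (w - v) <= c /\ c <= P (w + v) - f w.
Proof.
pose S := [set f w - P (w - v) | w in [set w | w \in U]].
have Sub w' : w' \in U -> ubound S (P (w' + v) - f w').
  move=> w'U _ [w wU <-]; rewrite lerBrDr addrAC lerBlDr -linearD /=.
  apply: le_trans (fP (memvD wU w'U)) _.
  have -> : w + w' = (w - v) + (w' + v) by rewrite addrACA addNr addr0.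
  by rewrite addrC seminormD.
have hS : has_sup S.
  split; first by exists (f 0 - P (0 - v)); exists 0 => //; exact: mem0v.
  by exists (P (0 + v) - f 0); apply: Sub; exact: mem0v.
exists (sup S) => w wU; split; first by apply: sup_upper_bound => //; exists w.
by apply: ge_sup; [case: hS | exact: Sub].
Qed.

Lemma hahn_banach_step (v : Y) : exists2 g : 'Hom(Y, R^o),
  forall u, u \in U -> g u = f u & forall x, x \in (U + <[v]>)%VS -> g x <= P x.
Proof.
have [vU|vU] := boolP (v \in U).
  exists f => // x; rewrite (addv_idPl _) ?sub1v //; exact: fP.
have [h h0 h1] := separating_functional vU; have [c hc] := hahn_banach_gap v.
exists (f + (c - f v) *: h) => [u uU|_ /memv_addP[u uU [_ /vlineP[t ->] ->]]].
  by rewrite add_lfunE scale_lfunE h0 // scaler0 addr0.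
have -> : (f + (c - f v) *: h) (u + t *: v) = f u + t * c :> R.
  by rewrite add_lfunE scale_lfunE !linearD !linearZ /= h0 // h1 /GRing.scale /=; ring.
have [->|t0] := eqVneq t 0; first by rewrite scale0r addr0 mul0r addr0 fP.
(* Scaling by [t] reduces to the gap inequalities at [w = t^-1 *: u]. *)
have -> : u + t *: v = t *: (t^-1 *: u + v) by rewrite scalerDr scalerA mulfV ?scale1r.
have -> : f u = t * f (t^-1 *: u) :> R by rewrite linearZ /GRing.scale /= mulrA mulfV ?mul1r.
rewrite (seminormZ hP); case: (ltgtP t 0) => [tn|tp|/eqP]; last by rewrite (negPf t0).
  have [+ _] := hc _ (memvZ (- t^-1) uU).
  rewrite scaleNr linearN /= -[- _ - v]opprD (seminormN hP) ltr0_norm //; nra.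
have [_] := hc _ (memvZ t^-1 uU); rewrite gtr0_norm //; nra.
Qed.

End HahnBanach.

Lemma hahn_banach (R : realType) (Y : vectType R) (P : Y -> R) (U : {vspace Y})
    (f : 'Hom(Y, R^o)) : is_seminorm P -> (forall u, u \in U -> f u <= P u) ->
  exists2 g : 'Hom(Y, R^o), forall u, u \in U -> g u = f u & forall x, g x <= P x.
Proof.
move=> hP; move: {2}(\dim {:Y} - \dim U)%N (leqnn (\dim {:Y} - \dim U)) => m.
elim: m U f => [|m IH] U f hd fP; have [YU|/subvPn[v _ vU]] := boolP (fullv <= U)%VS;
  try by exists f => // x; apply: fP; exact: (subvP YU) _ (memvf x).
  by have := dimvS (subvf (U + <[v]>)); have := dimv_add_line vU; lia.
have [g' g'U g'P] := hahn_banach_step hP fP v.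
have [|g gU gP] := IH _ g' _ g'P; first by have := dimv_add_line vU; lia.
by exists g => // u uU; rewrite gU ?g'U // (subvP (addvSl _ _)).
Qed.

Lemma norming_functional (R : realType) (Y : vectType R) (P : Y -> R) (y : Y) :
  is_seminorm P ->
  exists2 g : 'Hom(Y, R^o), forall z, `|g z| <= P z & g y = P y.
Proof.
move=> hP; have [->|y0] := eqVneq y 0.
  exists 0; last by rewrite zero_lfunE (seminorm0 hP).
  by move=> z; rewrite zero_lfunE normr0 (seminorm_ge0 hP).
have [|h _ h1] := @separating_functional _ _ 0%VS y; first by rewrite memv0.
have [|g gy gP] := @hahn_banach _ _ P <[y]>%VS (P y *: h) hP.
  move=> _ /vlineP[t ->]; rewrite scale_lfunE linearZ /= h1 (seminormZ hP).
  by rewrite /GRing.scale /= mulr1 mulrC ler_wpM2r ?seminorm_ge0 ?ler_norm.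
exists g; last by rewrite gy ?memv_line // scale_lfunE h1 /GRing.scale /= mulr1.
by move=> z; rewrite ler_norml gP andbT lerNl -linearN /= -(seminormN hP); exact: gP.
Qed.

Lemma lfun_inj_eqdim_inv (K : fieldType) (U V : vectType K) (f : 'Hom(U, V)) :
  injective f -> dim U = dim V -> exists2 g : 'Hom(V, U), cancel f g & cancel g f.
Proof.
move=> /lker0P f0 dUV; exists (f^-1)%VF; first exact: lker0_lfunK.
have fUV : limg f = fullv.
  apply/eqP; rewrite eqEdim subvf limg_dim_eq ?(eqP f0) ?capv0 //.
  by rewrite /= !dimvf dUV.
by move=> v; apply: limg_lfunVK; rewrite fUV memvf.
Qed.

Section Opnorm.
Variables (R : realType) (U V : vectType R) (NU : U -> R) (NV : V -> R).

Lemma opnorm_le (S : 'Hom(U, V)) M : NU 0 <= 1 ->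
  (forall x, NU x <= 1 -> NV (S x) <= M) -> opnorm NU NV S <= M.
Proof.
move=> h0 hM; apply: ge_sup; first by exists (NV (S 0)); exists 0.
by move=> _ [x hx <-]; exact: hM.
Qed.

Lemma opnorm_ge_bounded (S : 'Hom(U, V)) M :
  (forall x, NU x <= 1 -> NV (S x) <= M) ->
  forall x, NU x <= 1 -> NV (S x) <= opnorm NU NV S.
Proof.
move=> hM x hx; apply: sup_upper_bound; last by exists x.
by split; [exists (NV (S x)); exists x | exists M => _ [z hz <-]; exact: hM].
Qed.

Hypotheses (hU : is_norm NU) (hV : is_seminorm NV).

Lemma opnorm_ge (S : 'Hom(U, V)) x : NU x <= 1 -> NV (S x) <= opnorm NU NV S.
Proof.
have hVS : is_seminorm (fun x => NV (S x)).
  by split => [x1 x2|a x1]; rewrite ?linearD ?linearZ; [exact: seminormD | exact: seminormZ].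
have [M M0 hM] := seminorm_le_norm hU hVS.
apply: opnorm_ge_bounded => y hy; apply: le_trans (hM y) _; exact: ler_piMr.
Qed.

Lemma opnorm_bound (S : 'Hom(U, V)) x : NV (S x) <= opnorm NU NV S * NU x.
Proof.
have [->|x0] := eqVneq x 0.
  by rewrite linear0 (seminorm0 hV) (seminorm0 (norm_seminorm hU)) mulr0.
have Nx := norm_gt0 hU x0; have Nx' : 0 <= (NU x)^-1 by rewrite invr_ge0 ltW.
have := @opnorm_ge S ((NU x)^-1 *: x).
rewrite linearZ !(seminormZ (norm_seminorm hU)) (seminormZ hV) (ger0_norm Nx') mulVf ?gt_eqF //.
by rewrite ler_pdivrMl // mulrC => ->.
Qed.

End Opnorm.

Section Precomposition.
Variables (R : realType) (X Y : vectType R) (T : 'Hom(X, Y)).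

Definition precomp (g : 'Hom(Y, R^o)) : 'Hom(X, R^o) := (g \o T)%VF.

Fact precomp_is_linear : linear precomp.
Proof. by move=> a g h; rewrite /precomp comp_lfunDl comp_lfunZl. Qed.

HB.instance Definition _ := GRing.isLinear.Build R _ _ _ precomp precomp_is_linear.

Lemma adjointE g : adjoint T g = (g \o T)%VF.
Proof. by change (linfun precomp g = precomp g); rewrite lfunE. Qed.

End Precomposition.

Section IsometryTransfer.
Variables (R : realType) (D E : vectType R) (ND : D -> R) (NE : E -> R).
Variables (Phi : 'Hom(D, E)) (Psi : 'Hom(E, D)).
Hypotheses (PhiK : cancel Phi Psi) (PsiK : cancel Psi Phi).
Hypothesis Phi_iso : forall d, NE (Phi d) = ND d.

Lemma dualnorm_comp (f : 'Hom(D, R^o)) : dualnorm NE (f \o Psi)%VF = dualnorm ND f.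
Proof.
rewrite /dualnorm /opnorm; congr sup; apply/seteqP; split.
  move=> _ [e he <-]; exists (Psi e); last by rewrite comp_lfunE.
  by rewrite /= -Phi_iso PsiK.
move=> _ [d hd <-]; exists (Phi d); last by rewrite comp_lfunE PhiK.
by rewrite /= Phi_iso.
Qed.

Lemma ksmooth_isometry_to d k : ksmooth ND d k -> ksmooth NE (Phi d) k.
Proof.
case=> d1 [s [sJ Jspan sdim]]; split; first by rewrite Phi_iso.
pose L := linfun (precomp Psi).
have LE f : L f = (f \o Psi)%VF by rewrite lfunE.
have LPhi f : L (f \o Phi)%VF = f by apply/lfunP => e; rewrite LE !comp_lfunE PsiK.
have L0 : lker L == 0%VS.
  apply/lker0P => f f' /(congr1 (fun h : 'Hom(E, R^o) => (h \o Phi)%VF)).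
  by rewrite !LE => /lfunP e; apply/lfunP => x; move: (e x); rewrite !comp_lfunE PhiK.
exists (map L s); split.
- move=> _ /mapP[f /sJ[f1 fd] ->].
  by rewrite /Jset /= LE dualnorm_comp comp_lfunE PhiK.
- move=> g [g1 gd]; rewrite -(LPhi g) -limg_span; apply: memv_img; apply: Jspan.
  by split; [rewrite -dualnorm_comp -LE LPhi | rewrite comp_lfunE].
- by rewrite -limg_span limg_dim_eq // (eqP L0) capv0.
Qed.

End IsometryTransfer.

Lemma ksmooth_isometry (R : realType) (D E : vectType R) (ND : D -> R) (NE : E -> R)
    (Phi : 'Hom(D, E)) (Psi : 'Hom(E, D)) d k :
  cancel Phi Psi -> cancel Psi Phi -> (forall d, NE (Phi d) = ND d) ->
  ksmooth ND d k <-> ksmooth NE (Phi d) k.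
Proof.
move=> PhiK PsiK Phi_iso; split; first exact: ksmooth_isometry_to.
have Psi_iso e : ND (Psi e) = NE e by rewrite -Phi_iso PsiK.
by rewrite -{2}[d]PhiK; exact: ksmooth_isometry_to.
Qed.

Section Adjoint.
Variables (R : realType) (X Y : vectType R) (NX : X -> R) (NY : Y -> R).
Hypotheses (hX : is_norm NX) (hY : is_norm NY).

Let NX0 : NX 0 <= 1. Proof. by rewrite (seminorm0 (norm_seminorm hX)). Qed.
Let NY0 : NY 0 <= 1. Proof. by rewrite (seminorm0 (norm_seminorm hY)). Qed.

Lemma dualnorm_adjoint_le (S : 'Hom(X, Y)) (g : 'Hom(Y, R^o)) : dualnorm NY g <= 1 ->
  dualnorm NX (adjoint S g) <= opnorm NX NY S.
Proof.
move=> g1; rewrite adjointE; apply: opnorm_le NX0 _ => x x1.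
rewrite comp_lfunE; apply: le_trans (opnorm_bound hY (@abs_seminorm R) g (S x)) _.
apply: le_trans (opnorm_ge hX (norm_seminorm hY) S x1).
by rewrite ler_piMl // (seminorm_ge0 (norm_seminorm hY)).
Qed.

Lemma opnorm_adjoint (S : 'Hom(X, Y)) :
  opnorm (dualnorm NY) (dualnorm NX) (adjoint S) = opnorm NX NY S.
Proof.
have dual_le1 (g : 'Hom(Y, R^o)) : (forall y, `|g y| <= NY y) -> dualnorm NY g <= 1.
  by move=> gN; apply: opnorm_le NY0 _ => y y1; apply: le_trans (gN y) y1.
apply/eqP; rewrite eq_le; apply/andP; split.
  apply: opnorm_le (dualnorm_adjoint_le S) => //.
  by apply: dual_le1 => y; rewrite zero_lfunE normr0 (seminorm_ge0 (norm_seminorm hY)).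
apply: opnorm_le NX0 _ => x x1.
have [g gN gSx] := norming_functional (S x) (norm_seminorm hY).
rewrite -gSx; apply: le_trans (ler_norm _) _.
have -> : g (S x) = adjoint S g x by rewrite adjointE comp_lfunE.
apply: le_trans (opnorm_ge hX (@abs_seminorm R) _ x1) _.
exact: (opnorm_ge_bounded (dualnorm_adjoint_le S) (dual_le1 _ gN)).
Qed.

Lemma adjoint_inj : injective (@adjoint R X Y).
Proof.
move=> S S' SS'; apply/lfunP => x; apply/eqP; rewrite -subr_eq0; apply/eqP.
have [g _ gx] := norming_functional (S x - S' x) (norm_seminorm hY).
have gSS' : g (S x) = g (S' x).
  by have := congr1 (fun A : 'Hom(_, 'Hom(X, R^o)) => A g x) SS'; rewrite !adjointE !comp_lfunE.
by case: hY => _ _; apply; rewrite -gx linearB /= gSS' subrr.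
Qed.

End Adjoint.

Section AdjointMap.
Variables (R : realType) (X Y : vectType R).

Definition adjoint_map (S : 'Hom(X, Y)) := adjoint S.

Fact adjoint_map_is_linear : linear adjoint_map.
Proof.
move=> a S S'; apply/lfunP => g.
by rewrite add_lfunE scale_lfunE /adjoint_map !adjointE comp_lfunDr comp_lfunZr.
Qed.

HB.instance Definition _ := GRing.isLinear.Build R _ _ _ adjoint_map adjoint_map_is_linear.

Lemma adjoint_lfunE S : linfun adjoint_map S = adjoint S.
Proof. exact: lfunE. Qed.

End AdjointMap.

Unset Implicit Arguments.

Theorem proposition3p7 (R : realType) (X Y : vectType R)
  (NX : X -> R) (NY : Y -> R) (hX : is_norm NX) (hY : is_norm NY)
  (T : 'Hom(X, Y)) (k : nat) :
  opnorm NX NY T = 1 ->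
  (ksmooth (opnorm NX NY) T k <->
   ksmooth (opnorm (dualnorm NY) (dualnorm NX)) (adjoint T) k).
Proof.
(* [opnorm NX NY T = 1] is already the first conjunct of both sides. *)
move=> _.
have [||B AK BK] := @lfun_inj_eqdim_inv _ _ _ (linfun (@adjoint_map R X Y)).
- by move=> S S'; rewrite !adjoint_lfunE; exact: adjoint_inj hY S S'.
- by change (dim X * dim Y = dim Y * 1 * (dim X * 1))%N; rewrite !muln1 mulnC.
rewrite -adjoint_lfunE; apply: ksmooth_isometry AK BK _ => S.
by rewrite adjoint_lfunE opnorm_adjoint.
Qed.
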